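(* Let $n\ge4$, $0<\alpha_2,\alpha_3<1$, $\alpha_1=1-\alpha_2-\alpha_3$, $\lambda^*=\big(\frac{n-1+\alpha_1}{n},\frac{\alpha_2}{n},\frac{\alpha_3}{n}\big)$. Then $$\sum_{i_2=0}^{n}|l_{(n-i_2,i_2,0)}(\lambda^* )|\le\frac{2^{n+1}}{e\,n(\ln n-\ln2)}\Big(1+\frac{15}{n-3}\Big)\Big(1+\frac{e(\ln n-1)\,n(n+1)}{2^{n+1}}\Big),$$ $$\sum_{i_3=1}^{n}|l_{(n-i_3,0,i_3)}(\lambda^* )|\le\frac{2^{n+1}}{e\,n(\ln n-\ln2)}\Big(1+\frac{15}{n-3}\Big)\Big(1+\frac{e(\ln n-1)\,n^2}{2^{n+1}}\Big).$$
   Context: For an integer $n\ge1$ and $i=(i_1,i_2,i_3)\in\mathbb{Z}_+^3$ with $i_1+i_2+i_3=n$, $l_i(\lambda)=\prod_{s=1}^{3}\frac{1}{i_s!}\prod_{t=0}^{i_s-1}(n\lambda_s-t)$ for $\lambda=(\lambda_1,\lambda_2,\lambda_3)$ (Lagrange fundamental polynomials for the equally spaced nodes $i/n$ of a triangle in barycentric coordinates). *)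

From Stdlib Require Import Reals Factorial.
Open Scope R_scope.

Fixpoint falling (x : R) (k : nat) : R :=
  match k with
  | O => 1
  | S k' => falling x k' * (x - INR k')
  end.

Definition lag_factor (n i : nat) (lam : R) : R :=
  / INR (fact i) * falling (INR n * lam) i.

Definition lagr (n i1 i2 i3 : nat) (l1 l2 l3 : R) : R :=
  lag_factor n i1 l1 * lag_factor n i2 l2 * lag_factor n i3 l3.

From Stdlib Require Import Reals Lra Lia Psatz Factorial.
Open Scope R_scope.

(* With n λ* = (n - a - b, a, b), the Lagrange polynomials on an edge of the
   triangle factor as |(n-a-b choose n-k)| |(a choose k)|.  Comparing every
   factor of these generalized binomial coefficients with the integer ones via
   s - a <= s exp(-a/s) gives the term bound C(n,k)/k · a exp(-a (H_n - 1/k)),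
   H_n the harmonic numbers.  For k >= 2, H_n - 1/k >= ln n - ln 2 and
   a exp(-a y) <= 1/(e y) make this uniform in a; the sum of C(n,k)/k is then
   bounded via 1/k <= 1/(k+1) + 3/((k+1)(k+2)) and the absorption identity. *)

Fixpoint harmonic (k : nat) : R :=
  match k with O => 0 | S k' => harmonic k' + / INR (S k') end.

Definition gbinom (x : R) (k : nat) : R := / INR (fact k) * falling x k.

Lemma gbinom_0 x : gbinom x 0 = 1.
Proof. unfold gbinom. simpl. rewrite Rinv_1. ring. Qed.

Lemma falling_S_l x k : falling x (S k) = x * falling (x - 1) k.
Proof.
  revert x; induction k as [|k IH]; intro x; simpl.
  - ring.
  - simpl in IH. rewrite IH. destruct k; simpl; ring.
Qed.

Lemma gbinom_S x k : gbinom x (S k) = x / INR (S k) * gbinom (x - 1) k.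
Proof.
  unfold gbinom. rewrite falling_S_l, fact_simpl, mult_INR.
  pose proof (INR_fact_lt_0 k). pose proof (lt_0_INR (S k) (Nat.lt_0_succ k)).
  field; lra.
Qed.

Lemma gbinom_S_r x k : gbinom x (S k) = gbinom x k * ((x - INR k) / INR (S k)).
Proof.
  unfold gbinom. simpl falling. rewrite fact_simpl, mult_INR.
  pose proof (INR_fact_lt_0 k). pose proof (lt_0_INR (S k) (Nat.lt_0_succ k)).
  field; lra.
Qed.

Lemma Rabs_falling_le x y m :
  (forall t, (t < m)%nat -> Rabs (x - INR t) <= y - INR t) ->
  Rabs (falling x m) <= falling y m.
Proof.
  induction m as [|m IH]; intro Hxy; simpl.
  - rewrite Rabs_R1; lra.
  - rewrite Rabs_mult. apply Rmult_le_compat; try apply Rabs_pos.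
    + apply IH; intros; apply Hxy; lia.
    + apply Hxy; lia.
Qed.

Lemma fact_falling n m : (m <= n)%nat ->
  INR (fact n) = falling (INR n) m * INR (fact (n - m)).
Proof.
  induction m as [|m IH]; intro Hm.
  - simpl. rewrite Nat.sub_0_r. ring.
  - simpl falling. rewrite IH by lia.
    replace (n - m)%nat with (S (n - S m)) by lia.
    rewrite fact_simpl, mult_INR, S_INR, minus_INR, S_INR by lia. ring.
Qed.

Lemma C_nonneg m i : 0 <= C m i.
Proof.
  unfold C. left. apply Rdiv_lt_0_compat; [|apply Rmult_lt_0_compat]; apply INR_fact_lt_0.
Qed.

Lemma C_S m j : C (S m) (S j) = C m j * INR (S m) / INR (S j).
Proof.
  unfold C. rewrite Nat.sub_succ, !fact_simpl, !mult_INR.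
  pose proof (INR_fact_lt_0 m). pose proof (INR_fact_lt_0 j). pose proof (INR_fact_lt_0 (m - j)).
  pose proof (lt_0_INR (S m) (Nat.lt_0_succ m)). pose proof (lt_0_INR (S j) (Nat.lt_0_succ j)).
  field; repeat split; lra.
Qed.

Lemma C_n_1 n : C (S n) 1 = INR (S n).
Proof.
  unfold C. rewrite Nat.sub_succ, Nat.sub_0_r, fact_simpl, mult_INR.
  pose proof (INR_fact_lt_0 n). change (INR (fact 1)) with 1. field. lra.
Qed.

Lemma C_gbinom n k : (k <= n)%nat -> gbinom (INR n) (n - k) = C n k.
Proof.
  intro Hk. unfold gbinom, C.
  rewrite (fact_falling n (n - k)) by lia.
  replace (n - (n - k))%nat with k by lia.
  pose proof (INR_fact_lt_0 k). pose proof (INR_fact_lt_0 (n - k)).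
  field; lra.
Qed.

Lemma sum_C m : sum_f_R0 (C m) m = 2 ^ m.
Proof.
  replace 2 with (1 + 1) by ring. rewrite binomial.
  apply sum_eq. intros. rewrite !pow1. ring.
Qed.

Lemma sum_shift_le f p : (forall i, 0 <= f i) ->
  sum_f_R0 (fun k => f (S k)) p <= sum_f_R0 f (S p).
Proof.
  intro Hf. rewrite (decomp_sum f (S p)) by lia. simpl pred. specialize (Hf 0%nat). lra.
Qed.

Lemma sum_C_tail_le m j : (j <= m)%nat ->
  sum_f_R0 (fun k => C m (k + j)) (m - j) <= 2 ^ m.
Proof.
  induction j as [|j IH]; intro Hj.
  - rewrite Nat.sub_0_r, <- sum_C. right. apply sum_eq. intros. rewrite Nat.add_0_r. reflexivity.
  - eapply Rle_trans; [|apply IH; lia].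
    replace (m - j)%nat with (S (m - S j)) by lia.
    rewrite (sum_eq _ (fun k => C m (S k + j))) by (intros; f_equal; lia).
    apply (sum_shift_le (fun k => C m (k + j))). intro; apply C_nonneg.
Qed.

Lemma C_div_le n k : (1 <= k)%nat ->
  C n k / INR k <= C (S n) (S k) / (INR n + 1)
                   + 3 * C (S (S n)) (S (S k)) / ((INR n + 1) * (INR n + 2)).
Proof.
  intro Hk.
  rewrite !C_S, !S_INR.
  pose proof (C_nonneg n k) as Hc. pose proof (pos_INR n).
  assert (Hx : 1 <= INR k) by (apply (le_INR 1); lia).
  set (c := C n k) in *. set (x := INR k) in *.
  replace (c * (INR n + 1) / (x + 1) / (INR n + 1)
           + 3 * (c * (INR n + 1) / (x + 1) * (INR n + 1 + 1) / (x + 1 + 1))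
             / ((INR n + 1) * (INR n + 2)))
    with (c * ((x + 5) / ((x + 1) * (x + 2)))) by (field; repeat split; lra).
  unfold Rdiv. apply Rmult_le_compat_l; [lra|].
  apply Rmult_le_reg_r with (x * ((x + 1) * (x + 2))); [nra|].
  replace (/ x * (x * ((x + 1) * (x + 2)))) with ((x + 1) * (x + 2)) by (field; lra).
  replace ((x + 5) * / ((x + 1) * (x + 2)) * (x * ((x + 1) * (x + 2)))) with ((x + 5) * x)
    by (field; lra).
  nra.
Qed.

Lemma sum_C_div_le n : (1 <= n)%nat ->
  sum_f_R0 (fun k => C n (S k) / INR (S k)) (pred n)
    <= 2 ^ (n + 1) / (INR n + 1) + 6 * 2 ^ (n + 1) / ((INR n + 1) * (INR n + 2)).
Proof.
  intro Hn.
  pose proof (pos_INR n).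
  set (u := / (INR n + 1)). set (v := 3 / ((INR n + 1) * (INR n + 2))).
  assert (Hu : 0 < u) by (apply Rinv_0_lt_compat; lra).
  assert (Hv : 0 < v) by (apply Rdiv_lt_0_compat; nra).
  assert (Hfirst : sum_f_R0 (fun k => C (S n) (k + 2)) (pred n) <= 2 ^ (n + 1)).
  { rewrite Nat.add_1_r. replace (pred n) with (S n - 2)%nat by lia. apply sum_C_tail_le. lia. }
  assert (Hsecond : sum_f_R0 (fun k => C (S (S n)) (k + 3)) (pred n) <= 2 * 2 ^ (n + 1)).
  { replace (2 * 2 ^ (n + 1)) with (2 ^ S (S n)) by (rewrite Nat.add_1_r; reflexivity).
    replace (pred n) with (S (S n) - 3)%nat by lia. apply sum_C_tail_le. lia. }
  apply Rle_trans with (u * sum_f_R0 (fun k => C (S n) (k + 2)) (pred n)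
                        + v * sum_f_R0 (fun k => C (S (S n)) (k + 3)) (pred n)).
  - rewrite !scal_sum, <- sum_plus. apply sum_Rle. intros k _.
    eapply Rle_trans; [apply C_div_le; lia|]. right.
    replace (k + 2)%nat with (S (S k)) by lia. replace (k + 3)%nat with (S (S (S k))) by lia.
    unfold u, v. field. lra.
  - replace (2 ^ (n + 1) / (INR n + 1) + 6 * 2 ^ (n + 1) / ((INR n + 1) * (INR n + 2)))
      with (u * 2 ^ (n + 1) + v * (2 * 2 ^ (n + 1))) by (unfold u, v; field; lra).
    apply Rplus_le_compat; apply Rmult_le_compat_l; lra.
Qed.

Lemma sub_le_mul_exp s a : 0 < s -> s - a <= s * exp (- (a / s)).
Proof.
  intro Hs. pose proof (exp_ineq1_le (- (a / s))).
  replace (s - a) with (s * (1 + - (a / s))) by (field; lra).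
  apply Rmult_le_compat_l; lra.
Qed.

Lemma mul_exp_neg_le a y : 0 < y -> a * exp (- a * y) <= / (exp 1 * y).
Proof.
  intro Hy.
  pose proof (exp_pos 1) as He. pose proof (exp_pos (a * y)) as Hu.
  assert (Hmax : a * y <= exp (a * y) / exp 1).
  { pose proof (exp_ineq1_le (a * y - 1)).
    replace (exp (a * y)) with (exp (a * y - 1) * exp 1)
      by (rewrite <- exp_plus; f_equal; ring).
    replace (exp (a * y - 1) * exp 1 / exp 1) with (exp (a * y - 1)) by (field; lra).
    lra. }
  replace (- a * y) with (- (a * y)) by ring. rewrite exp_Ropp.
  apply Rmult_le_reg_r with (y * exp (a * y)); [apply Rmult_lt_0_compat; lra|].
  replace (a * / exp (a * y) * (y * exp (a * y))) with (a * y) by (field; lra).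
  replace (/ (exp 1 * y) * (y * exp (a * y))) with (exp (a * y) / exp 1) by (field; lra).
  exact Hmax.
Qed.

Lemma harmonic_ge_1 n : (1 <= n)%nat -> 1 <= harmonic n.
Proof.
  induction n as [|[|n] IH]; intro Hn; [lia| simpl; lra |].
  cbn [harmonic] in *.
  assert (0 < / INR (S (S n))) by (apply Rinv_0_lt_compat, lt_0_INR; lia).
  specialize (IH ltac:(lia)). lra.
Qed.

Lemma harmonic_ge_ln k : ln (INR k + 1) <= harmonic k.
Proof.
  induction k as [|k IH].
  - simpl. rewrite Rplus_0_l, ln_1. lra.
  - cbn [harmonic]. rewrite S_INR.
    set (x := INR k + 1) in *.
    assert (Hx : 0 < x) by (pose proof (pos_INR k); unfold x; lra).
    assert (Hstep : ln ((x + 1) / x) <= / x).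
    { pose proof (exp_ineq1_le (ln ((x + 1) / x))) as Hexp.
      rewrite exp_ln in Hexp by (apply Rdiv_lt_0_compat; lra).
      replace ((x + 1) / x) with (1 + / x) in * by (field; lra). lra. }
    unfold Rdiv in Hstep. rewrite ln_mult, ln_Rinv in Hstep by (try apply Rinv_0_lt_compat; lra).
    lra.
Qed.

Lemma falling_sub_le n a : 0 <= a <= 1 -> forall m, (m <= n)%nat ->
  0 <= falling (INR n - a) m
    <= falling (INR n) m * exp (- a * (harmonic n - harmonic (n - m))).
Proof.
  intros Ha m; induction m as [|m IH]; intro Hm.
  - rewrite Nat.sub_0_r, Rminus_diag, Rmult_0_r, exp_0. simpl. lra.
  - destruct (IH ltac:(lia)) as [Hpos Hle].
    set (s := INR n - INR m).
    assert (Hs : 1 <= s).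
    { unfold s. rewrite <- minus_INR by lia.
      apply (le_INR 1). lia. }
    assert (Hharm : harmonic (n - m) = harmonic (n - S m) + / s).
    { replace (n - m)%nat with (S (n - S m)) by lia. cbn [harmonic].
      unfold s. rewrite S_INR, minus_INR, S_INR by lia. do 2 f_equal. ring. }
    rewrite Hharm in Hle.
    replace (- a * (harmonic n - harmonic (n - S m)))
      with (- a * (harmonic n - (harmonic (n - S m) + / s)) + - (a / s)) by (field; lra).
    rewrite exp_plus. simpl falling. fold s.
    replace (INR n - a - INR m) with (s - a) by (unfold s; ring).
    pose proof (sub_le_mul_exp s a ltac:(lra)).
    split; [apply Rmult_le_pos; lra|].
    eapply Rle_trans; [apply Rmult_le_compat; [lra | lra | exact Hle | eassumption] | right; ring].
Qed.

Lemma Rabs_gbinom_pred_le a k : 0 <= a <= 1 ->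
  Rabs (gbinom (a - 1) k) <= exp (- a * harmonic k).
Proof.
  intro Ha; induction k as [|k IH].
  - unfold gbinom. simpl. rewrite Rinv_1, Rmult_1_r, Rabs_R1, Rmult_0_r, exp_0. lra.
  - rewrite gbinom_S_r, Rabs_mult. cbn [harmonic].
    set (s := INR (S k)).
    assert (Hs : 1 <= s) by (apply (le_INR 1); lia).
    replace (Rabs ((a - 1 - INR k) / s)) with ((s - a) / s).
    2:{ assert (Hsk : s = INR k + 1) by (unfold s; apply S_INR).
        rewrite Rabs_left1, Hsk; [field; lra |].
        assert (0 < / s) by (apply Rinv_0_lt_compat; lra).
        pose proof (pos_INR k). unfold Rdiv. nra. }
    replace (- a * (harmonic k + / s)) with (- a * harmonic k + - (a / s)) by (field; lra).
    rewrite exp_plus.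
    assert (Hfactor : (s - a) / s <= exp (- (a / s))).
    { pose proof (sub_le_mul_exp s a ltac:(lra)).
      apply Rmult_le_reg_l with s; [lra|]. unfold Rdiv.
      rewrite <- Rmult_assoc, (Rmult_comm s (s - a)), Rmult_assoc, Rinv_r by lra. lra. }
    apply Rmult_le_compat; try apply Rabs_pos; [|exact IH|exact Hfactor].
    apply Rmult_le_pos; [|left; apply Rinv_0_lt_compat]; lra.
Qed.

Lemma Rabs_gbinom_sub_le n k a b : (1 <= k <= n)%nat -> 0 <= a <= 1 -> 0 <= b <= 1 ->
  Rabs (gbinom (INR n - a - b) (n - k))
    <= C n k * exp (- a * (harmonic n - harmonic k)).
Proof.
  intros Hk Ha Hb.
  assert (Hfall : Rabs (falling (INR n - a - b) (n - k)) <= falling (INR n - a) (n - k)).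
  { apply Rabs_falling_le. intros t Ht.
    assert (INR t + 2 <= INR n) by (change 2 with (INR 2); rewrite <- plus_INR; apply le_INR; lia).
    rewrite Rabs_right; lra. }
  destruct (falling_sub_le n a Ha (n - k) ltac:(lia)) as [_ Hexp].
  replace (n - (n - k))%nat with k in Hexp by lia.
  rewrite <- (C_gbinom n k) by lia. unfold gbinom.
  pose proof (INR_fact_lt_0 (n - k)).
  rewrite Rabs_mult, Rabs_inv, Rabs_right by lra. rewrite Rmult_assoc.
  apply Rmult_le_compat_l; [left; apply Rinv_0_lt_compat; lra | lra].
Qed.

(* [edge_term n a b k] is |l_(n-k,k,0)(λ)| at n λ = (n - a - b, a, b). *)
Definition edge_term (n : nat) (a b : R) (k : nat) : R :=
  Rabs (gbinom (INR n - a - b) (n - k)) * Rabs (gbinom a k).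

Lemma edge_term_le n k a b : (1 <= k <= n)%nat -> 0 <= a <= 1 -> 0 <= b <= 1 ->
  edge_term n a b k <= C n k / INR k * (a * exp (- a * (harmonic n - / INR k))).
Proof.
  intros Hk Ha Hb. unfold edge_term.
  pose proof (Rabs_gbinom_sub_le n k a b Hk Ha Hb) as Hfirst.
  destruct k as [|j]; [lia|].
  pose proof (Rabs_gbinom_pred_le a j Ha) as Hsecond.
  assert (Hj : 0 < INR (S j)) by (apply lt_0_INR; lia).
  assert (Hfrac : 0 <= a / INR (S j))
    by (unfold Rdiv; apply Rmult_le_pos; [lra | left; apply Rinv_0_lt_compat; lra]).
  rewrite gbinom_S, Rabs_mult, (Rabs_right (a / _)) by lra.
  replace (- a * (harmonic n - / INR (S j)))
    with (- a * (harmonic n - harmonic (S j)) + - a * harmonic j) by (cbn [harmonic]; ring).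
  rewrite exp_plus.
  apply Rle_trans with (C n (S j) * exp (- a * (harmonic n - harmonic (S j))) *
                        (a / INR (S j) * exp (- a * harmonic j))).
  - apply Rmult_le_compat; [apply Rabs_pos | | exact Hfirst | ].
    + apply Rmult_le_pos; [exact Hfrac | apply Rabs_pos].
    + apply Rmult_le_compat_l; [exact Hfrac | exact Hsecond].
  - right. field. lra.
Qed.

Lemma edge_term_0_le n a b : 0 <= a <= 1 -> 0 <= b <= 1 -> edge_term n a b 0 <= 1.
Proof.
  intros Ha Hb. unfold edge_term.
  rewrite gbinom_0, Nat.sub_0_r, Rabs_R1, Rmult_1_r.
  unfold gbinom. rewrite Rabs_mult, Rabs_inv.
  pose proof (INR_fact_lt_0 n).
  rewrite (Rabs_right (INR (fact n))) by lra.
  assert (Rabs (falling (INR n - a - b) n) <= INR (fact n)).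
  { rewrite (fact_falling n n), Nat.sub_diag, Rmult_1_r by lia.
    apply Rabs_falling_le. intros t Ht.
    assert (INR t + 1 <= INR n) by (rewrite <- S_INR; apply le_INR; lia).
    apply Rabs_le. lra. }
  apply Rmult_le_reg_l with (INR (fact n)); [lra|].
  rewrite <- Rmult_assoc, Rinv_r by lra. lra.
Qed.

Lemma edge_term_1_le n a b : (1 <= n)%nat -> 0 <= a <= 1 -> 0 <= b <= 1 ->
  edge_term n a b 1 <= INR n.
Proof.
  intros Hn Ha Hb.
  eapply Rle_trans; [apply edge_term_le; auto|].
  destruct n as [|n]; [lia|].
  rewrite C_n_1. change (INR 1) with 1. rewrite Rdiv_1_r, Rinv_1.
  assert (Hexp : exp (- a * (harmonic (S n) - 1)) <= 1).
  { pose proof (harmonic_ge_1 (S n) Hn).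
    destruct (Rle_lt_or_eq_dec (- a * (harmonic (S n) - 1)) 0) as [Hlt|Heq]; [nra| |].
    - pose proof (exp_increasing _ _ Hlt). rewrite exp_0 in *. lra.
    - rewrite Heq, exp_0. lra. }
  pose proof (exp_pos (- a * (harmonic (S n) - 1))).
  pose proof (pos_INR (S n)).
  rewrite <- (Rmult_1_r (INR (S n))) at 2.
  apply Rmult_le_compat_l; nra.
Qed.

Lemma edge_term_large_le n k a b : (3 <= n)%nat -> (2 <= k <= n)%nat ->
  0 <= a <= 1 -> 0 <= b <= 1 ->
  edge_term n a b k <= C n k / INR k * / (exp 1 * (ln (INR n) - ln 2)).
Proof.
  intros Hn Hk Ha Hb.
  assert (HN : 3 <= INR n) by (replace 3 with (INR 3) by (simpl; ring); apply le_INR; lia).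
  assert (Hlog : 0 < ln (INR n) - ln 2) by (pose proof (ln_increasing 2 (INR n)); lra).
  assert (Hharm : ln (INR n) - ln 2 <= harmonic n - / INR k).
  { pose proof (harmonic_ge_ln n). pose proof ln_lt_2.
    pose proof (ln_increasing (INR n) (INR n + 1)).
    assert (/ INR k <= / 2)
      by (apply Rinv_le_contravar; [lra | change 2 with (INR 2); apply le_INR; lia]).
    lra. }
  eapply Rle_trans; [apply edge_term_le; auto; lia|].
  apply Rmult_le_compat_l.
  { apply Rmult_le_pos; [apply C_nonneg | left; apply Rinv_0_lt_compat, lt_0_INR; lia]. }
  eapply Rle_trans; [apply mul_exp_neg_le; lra|].
  pose proof (exp_pos 1).
  apply Rinv_le_contravar; [apply Rmult_lt_0_compat; lra|].
  apply Rmult_le_compat_l; lra.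
Qed.

Definition edge_const (n : nat) : R :=
  2 ^ (n + 1) / (exp 1 * INR n * (ln (INR n) - ln 2)) * (1 + 15 / (INR n - 3)).

Lemma quartic_le_pow2 n : (4 <= n)%nat ->
  INR n * (INR n - 3) * (INR n - 2) * (INR n + 1) <= 12 * 2 ^ n.
Proof.
  intro Hn.
  assert (Hind : forall m, let x := INR (m + 7) in
            x * (x - 3) * (x - 2) * (x + 1) <= 12 * 2 ^ (m + 7)).
  { induction m as [|m IH]; cbv zeta in *; [simpl; lra|].
    replace (S m + 7)%nat with (S (m + 7)) by lia.
    rewrite S_INR. simpl pow.
    set (x := INR (m + 7)) in *.
    assert (7 <= x) by (unfold x; rewrite plus_INR; simpl; pose proof (pos_INR m); lra).
    assert (0 <= (x + 1) * (x - 2) * (x * x - 7 * x + 2)) by (apply Rmult_le_pos; nra).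
    nra. }
  destruct (Nat.le_gt_cases 7 n) as [H7|H7].
  - replace n with ((n - 7) + 7)%nat by lia. apply Hind.
  - assert (n = 4 \/ n = 5 \/ n = 6)%nat as [E|[E|E]] by lia; subst n; simpl; lra.
Qed.

Lemma edge_const_arith N P X e : 4 <= N -> 0 < X -> X <= (N - 2) / 2 -> 0 < e <= 3 -> 0 < P ->
  N * (N - 3) * (N - 2) * (N + 1) <= 6 * P ->
  1 + N + / (e * X) * (P / (N + 1) + 6 * P / ((N + 1) * (N + 2)))
    <= P / (e * N * X) * (1 + 15 / (N - 3)).
Proof.
  intros HN HX HX2 He HP Hpoly.
  assert (HD : 0 < N * (N - 3)) by nra.
  assert (HeX : 0 < e * X) by nra.
  (* 15/(N-3) = 6/(N-3) + 9/(N-3): the first part absorbs the binomial tail, the second 1 + N *)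
  assert (Htail : P / (N + 1) + 6 * P / ((N + 1) * (N + 2)) + 9 * P / (N * (N - 3))
                  <= P / N * (1 + 15 / (N - 3))).
  { assert (P / (N + 1) <= P / N)
      by (apply Rmult_le_compat_l; [lra | apply Rinv_le_contravar; lra]).
    assert (6 * P / ((N + 1) * (N + 2)) <= 6 * P / (N * (N - 3)))
      by (apply Rmult_le_compat_l; [lra | apply Rinv_le_contravar; nra]).
    replace (P / N * (1 + 15 / (N - 3)))
      with (P / N + 6 * P / (N * (N - 3)) + 9 * P / (N * (N - 3))) by (field; lra).
    lra. }
  assert (Hhead : (1 + N) * (e * X) <= 9 * P / (N * (N - 3))).
  { apply Rle_trans with ((1 + N) * (3 * ((N - 2) / 2))).
    - apply Rmult_le_compat_l; [lra|]. apply Rmult_le_compat; lra.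
    - apply Rmult_le_reg_r with (N * (N - 3)); [lra|].
      replace (9 * P / (N * (N - 3)) * (N * (N - 3))) with (9 * P) by (field; lra).
      nra. }
  replace (P / (e * N * X) * (1 + 15 / (N - 3)))
    with (/ (e * X) * (P / N * (1 + 15 / (N - 3)))) by (field; repeat split; lra).
  replace (1 + N) with (/ (e * X) * ((1 + N) * (e * X))) by (field; lra).
  rewrite <- Rmult_plus_distr_l.
  apply Rmult_le_compat_l; [left; apply Rinv_0_lt_compat; lra | lra].
Qed.

Lemma edge_const_ge n : (4 <= n)%nat ->
  1 + INR n + / (exp 1 * (ln (INR n) - ln 2)) *
    (2 ^ (n + 1) / (INR n + 1) + 6 * 2 ^ (n + 1) / ((INR n + 1) * (INR n + 2)))
  <= edge_const n.
Proof.
  intro Hn. unfold edge_const.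
  assert (HN : 4 <= INR n) by (replace 4 with (INR 4) by (simpl; ring); apply le_INR; lia).
  assert (Hlog : ln (INR n) - ln 2 = ln (INR n / 2))
    by (unfold Rdiv; rewrite ln_mult, ln_Rinv; lra).
  apply edge_const_arith; try lra.
  - pose proof (ln_increasing 2 (INR n)). lra.
  - rewrite Hlog. pose proof (exp_ineq1_le (ln (INR n / 2))) as Hexp.
    rewrite exp_ln in Hexp by lra. lra.
  - split; [apply exp_pos | apply exp_le_3].
  - apply pow_lt. lra.
  - pose proof (quartic_le_pow2 n Hn). rewrite pow_add. simpl pow. lra.
Qed.

Lemma edge_const_pos n : (4 <= n)%nat -> 0 < edge_const n.
Proof.
  intro Hn. unfold edge_const.
  assert (HN : 4 <= INR n) by (replace 4 with (INR 4) by (simpl; ring); apply le_INR; lia).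
  assert (ln 2 < ln (INR n)) by (apply ln_increasing; lra).
  assert (0 < 15 / (INR n - 3)) by (apply Rdiv_lt_0_compat; lra).
  apply Rmult_lt_0_compat; [apply Rdiv_lt_0_compat|lra].
  - apply pow_lt. lra.
  - apply Rmult_lt_0_compat; [apply Rmult_lt_0_compat; [apply exp_pos|]|]; lra.
Qed.

Lemma edge_const_le_mul n t : (4 <= n)%nat -> 0 <= t ->
  edge_const n <= edge_const n * (1 + exp 1 * (ln (INR n) - 1) * t / 2 ^ (n + 1)).
Proof.
  intros Hn Ht. pose proof (edge_const_pos n Hn).
  assert (HN : 4 <= INR n) by (replace 4 with (INR 4) by (simpl; ring); apply le_INR; lia).
  assert (1 <= ln (INR n))
    by (rewrite <- (ln_exp 1); left;
        apply ln_increasing; [apply exp_pos | pose proof exp_le_3; lra]).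
  assert (0 <= exp 1 * (ln (INR n) - 1) * t / 2 ^ (n + 1)).
  { apply Rmult_le_pos; [apply Rmult_le_pos; [apply Rmult_le_pos; [left; apply exp_pos|]|]|
     left; apply Rinv_0_lt_compat, pow_lt]; lra. }
  nra.
Qed.

Lemma sum_edge_terms_le n a b : (4 <= n)%nat -> 0 <= a <= 1 -> 0 <= b <= 1 ->
  sum_f_R0 (edge_term n a b) n <= edge_const n.
Proof.
  intros Hn Ha Hb.
  set (c := fun k => C n k / INR k).
  set (K := / (exp 1 * (ln (INR n) - ln 2))).
  assert (HK : 0 < K).
  { assert (ln 2 < ln (INR n))
      by (apply ln_increasing; [lra | replace 2 with (INR 2) by (simpl; ring); apply lt_INR; lia]).
    apply Rinv_0_lt_compat, Rmult_lt_0_compat; [apply exp_pos | lra]. }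
  assert (Htail : sum_f_R0 (fun i => edge_term n a b (S (S i))) (pred (pred n))
                  <= K * sum_f_R0 (fun k => c (S k)) (pred n)).
  { rewrite scal_sum. replace (pred n) with (S (pred (pred n))) by lia.
    eapply Rle_trans; [|apply (sum_shift_le (fun k => c (S k) * K))].
    - apply sum_Rle. intros i Hi. apply edge_term_large_le; auto; lia.
    - intro k. apply Rmult_le_pos; [|lra].
      apply Rmult_le_pos; [apply C_nonneg | left; apply Rinv_0_lt_compat, lt_0_INR; lia]. }
  assert (Hbinom : K * sum_f_R0 (fun k => c (S k)) (pred n)
          <= K * (2 ^ (n + 1) / (INR n + 1) + 6 * 2 ^ (n + 1) / ((INR n + 1) * (INR n + 2))))
    by (apply Rmult_le_compat_l; [lra | exact (sum_C_div_le n ltac:(lia))]).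
  pose proof (edge_term_0_le n a b Ha Hb).
  pose proof (edge_term_1_le n a b ltac:(lia) Ha Hb).
  pose proof (edge_const_ge n Hn).
  rewrite decomp_sum, (decomp_sum (fun i => edge_term n a b (S i))) by lia.
  unfold K in *. lra.
Qed.

Lemma Rabs_lagr_edge12 n k a b l1 l2 l3 :
  INR n * l1 = INR n - a - b -> INR n * l2 = a ->
  Rabs (lagr n (n - k) k 0 l1 l2 l3) = edge_term n a b k.
Proof.
  intros H1 H2.
  change (lagr n (n - k) k 0 l1 l2 l3)
    with (gbinom (INR n * l1) (n - k) * gbinom (INR n * l2) k * gbinom (INR n * l3) 0).
  rewrite H1, H2, gbinom_0, Rmult_1_r, Rabs_mult. reflexivity.
Qed.

Lemma Rabs_lagr_edge13 n k a b l1 l2 l3 :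
  INR n * l1 = INR n - a - b -> INR n * l3 = a ->
  Rabs (lagr n (n - k) 0 k l1 l2 l3) = edge_term n a b k.
Proof.
  intros H1 H3.
  change (lagr n (n - k) 0 k l1 l2 l3)
    with (gbinom (INR n * l1) (n - k) * gbinom (INR n * l2) 0 * gbinom (INR n * l3) k).
  rewrite H1, H3, gbinom_0, Rmult_1_r, Rabs_mult. reflexivity.
Qed.

Theorem lemma27 (n : nat) (a2 a3 : R) :
  (4 <= n)%nat -> 0 < a2 < 1 -> 0 < a3 < 1 ->
  let a1 := 1 - a2 - a3 in
  let N := INR n in
  let L1 := (N - 1 + a1) / N in
  let L2 := a2 / N in
  let L3 := a3 / N in
  let C := 2 ^ (n + 1) / (exp 1 * N * (ln N - ln 2)) * (1 + 15 / (N - 3)) in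
  sum_f_R0 (fun i2 => Rabs (lagr n (n - i2) i2 0 L1 L2 L3)) n
    <= C * (1 + exp 1 * (ln N - 1) * (N * (N + 1)) / 2 ^ (n + 1))
  /\
  sum_f_R0 (fun k => Rabs (lagr n (n - (k + 1)) 0 (k + 1) L1 L2 L3)) (n - 1)
    <= C * (1 + exp 1 * (ln N - 1) * (N ^ 2) / 2 ^ (n + 1)).
Proof.
  intros Hn Ha2 Ha3 a1 N L1 L2 L3 C.
  assert (HN : 4 <= N) by (unfold N; replace 4 with (INR 4) by (simpl; ring); apply le_INR; lia).
  assert (HL1 : INR n * L1 = INR n - a2 - a3) by (unfold L1, a1; fold N; field; lra).
  assert (HL1' : INR n * L1 = INR n - a3 - a2) by lra.
  assert (HL2 : INR n * L2 = a2) by (unfold L2; fold N; field; lra).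
  assert (HL3 : INR n * L3 = a3) by (unfold L3; fold N; field; lra).
  change C with (edge_const n).
  split.
  - eapply Rle_trans; [|apply edge_const_le_mul; [exact Hn | apply Rmult_le_pos; lra]].
    rewrite (sum_eq _ (edge_term n a2 a3)) by (intros; apply Rabs_lagr_edge12; assumption).
    apply sum_edge_terms_le; [exact Hn | split | split]; lra.
  - eapply Rle_trans; [|apply edge_const_le_mul; [exact Hn | apply pow_le; lra]].
    rewrite (sum_eq _ (fun k => edge_term n a3 a2 (S k)))
      by (intros; rewrite Nat.add_1_r; apply Rabs_lagr_edge13; assumption).
    eapply Rle_trans; [apply sum_shift_le; intro; apply Rmult_le_pos; apply Rabs_pos|].
    replace (S (n - 1)) with n by lia.
    apply sum_edge_terms_le; [exact Hn | split | split]; lra.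
Qed.
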